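(* Let $\xi\ge 0$. For every set $E\subset\mathbb{R}_+$, $$\mathrm{Dim}_H E=\inf\Big\{\rho>0:\ \sum_{n\ge -1}\widetilde{\nu}^n_{\rho,\xi}(E)<+\infty\Big\},$$ where for $\rho>0$ and $n\ge -1$, $$\widetilde{\nu}^n_{\rho,\xi}(E)=\inf\Big\{\sum_{i=1}^m\Big(\frac{\mathrm{diam}(I_i)}{2^n}\Big)^\rho\Big|\log_2\frac{\mathrm{diam}(I_i)}{2^n}\Big|^\xi:\ \{I_i\}_{i=1}^m\in\mathcal{I}_n(E)\Big\}.$$
   Context: Let $S_{-1}=[0,1/2)$ and $S_n=[2^{n-1},2^n)$ for $n\ge 0$. For $E\subset\mathbb{R}_+$ and $n\ge -1$, $\mathcal{I}_n(E)$ is the set of finite families $\{I_i\}_{i=1}^m$ of intervals $I_i=[x_i,y_i]$ with $x_i,y_i\in\mathbb{N}$, $y_i>x_i$, $I_i\subset S_n$, and $E\cap S_n\subset\bigcup_i I_i$; $\mathrm{diam}([a,b])=b-a$. For $\rho\ge0$, $\nu^n_\rho(E)=\inf\{\sum_{i=1}^m (\mathrm{diam}(I_i)/2^n)^\rho : \{I_i\}\in\mathcal{I}_n(E)\}$, and the macroscopic Hausdorff dimension is $\mathrm{Dim}_H E=\inf\{\rho>0:\sum_{n\ge-1}\nu^n_\rho(E)<\infty\}$. *)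

From HB Require Import structures.
From mathcomp Require Import all_boot all_order all_algebra.
From mathcomp Require Import all_classical all_reals all_analysis.
Set Implicit Arguments. Unset Strict Implicit. Unset Printing Implicit Defensive.
Import Order.TTheory GRing.Theory Num.Theory.
Local Open Scope classical_set_scope.
Local Open Scope ring_scope.

Section MacroDim.
Variable R : realType.

Definition shell (n : int) : set R :=
  if (n < 0)%R then `[0, 2^-1[%classic
  else `[(2:R) ^ (n - 1), (2:R) ^ n[%classic.

Definition nat_itv (p : nat * nat) : set R := `[p.1%:R, p.2%:R]%classic.

(* A finite family (seq of endpoint pairs) belongs to I_n(E). The empty family
   is allowed (m = 0). *)
Definition admissible (n : int) (E : set R) (s : seq (nat * nat)) : Prop :=
  (forall p, p \in s -> (p.1 < p.2)%N /\ nat_itv p `<=` shell n) /\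
  (E `&` shell n `<=` [set z | exists2 p, p \in s & nat_itv p z]).

Definition rel_diam (n : int) (p : nat * nat) : R :=
  (p.2 - p.1)%:R / (2:R) ^ n.

(* Infimum over I_n(E) of \sum_i g (diam(I_i)/2^n), as an extended real
   (inf of the empty set is +oo). *)
Definition cover_inf (g : R -> R) (n : int) (E : set R) : \bar R :=
  ereal_inf [set (\sum_(p <- s) g (rel_diam n p))%:E
            | s in admissible n E].

Definition nu (rho : R) (n : int) (E : set R) : \bar R :=
  cover_inf (fun t => t `^ rho) n E.

Definition log2 (x : R) : R := ln x / ln 2.

Definition nu_tilde (rho xi : R) (n : int) (E : set R) : \bar R :=
  cover_inf (fun t => t `^ rho * `|log2 t| `^ xi) n E.

Definition sum_shells (f : int -> \bar R) : \bar R :=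
  (\sum_(0 <= k <oo) f ((k%:Z) - 1)%R)%E.

Definition DimH (E : set R) : \bar R :=
  ereal_inf [set rho%:E | rho in [set rho : R |
     0 < rho /\ (sum_shells (fun n => nu rho n E) < +oo)%E]].

End MacroDim.

(* The relative diameters of the intervals of an admissible cover lie in
   (0, 1/2], where |log2 t| >= 1; hence nu^n_rho <= tilde-nu^n_{rho,xi}, and an
   exponent with finite tilde-nu series also has a finite nu series.
   Conversely t^eps |log2 t|^xi is bounded on (0, 1/2] for every eps > 0, so
   tilde-nu^n_{rho+eps,xi} <= C nu^n_rho: if the nu series converges at rho,
   the tilde-nu series converges at rho + eps, and the two infima coincide. *)

Set Warnings "-notation-overridden,-ambiguous-paths,-notation-incompatible-prefix".
From HB Require Import structures.
From mathcomp Require Import all_boot all_order all_algebra.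
From mathcomp Require Import all_classical all_reals all_analysis.
From mathcomp Require Import lra ring.
Set Implicit Arguments. Unset Strict Implicit. Unset Printing Implicit Defensive.
Import Order.TTheory GRing.Theory Num.Theory.
Local Open Scope classical_set_scope.
Local Open Scope ring_scope.

Section LogWeight.
Variable R : realType.
Implicit Types c d t v x xi rho eps : R.

Lemma ln_le_mul_subr_ln d x : 0 < d -> 0 < x -> ln x <= d * x - ln d.
Proof.
move=> d0 x0; have := ln_sublinear (mulr_gt0 d0 x0).
rewrite lnM ?posrE //; lra.
Qed.

Lemma powR_mul_expR_le xi c v : 0 <= xi -> 0 < c -> 0 < v ->
  v `^ xi * expR (- (c * v)) <= expR (- (xi * ln (c / (xi + 1)))).
Proof.
move=> xi0 c0 v0; set d := c / (xi + 1).
have d0 : 0 < d by rewrite divr_gt0 //; lra.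
(* xi ln v <= xi (d v - ln d), and the linear terms cancel since xi d <= c. *)
have xid : xi * d <= c by rewrite /d mulrA ler_pdivrMr; nra.
rewrite /powR gt_eqF // -expRD ler_expR.
have := ler_wpM2l xi0 (ln_le_mul_subr_ln d0 v0); nra.
Qed.

Lemma ln2_gt0 : 0 < ln (2 : R).
Proof. by rewrite ln_gt0 // ltr1n. Qed.

Lemma ln_log2 t : ln t = log2 t * ln 2.
Proof. by rewrite /log2 divfK // gt_eqF // ln2_gt0. Qed.

Lemma log2_le_N1 t : 0 < t -> t <= 2^-1 -> log2 t <= -1.
Proof.
move=> t0 th; have l2 := ln2_gt0.
have : ln t <= - ln (2 : R) by rewrite -lnV ?posrE // ler_ln ?posrE.
by rewrite ln_log2 -[X in _ <= X]mulN1r ler_pM2r.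
Qed.

Lemma powR_le_log2_weight rho xi t : 0 <= xi -> 0 < t -> t <= 2^-1 ->
  t `^ rho <= t `^ rho * `|log2 t| `^ xi.
Proof.
move=> xi0 t0 th; rewrite ler_peMr ?powR_ge0 // -(powRr0 `|log2 t|).
apply: ler_powR xi0; have l1 := log2_le_N1 t0 th.
by rewrite ler0_norm; lra.
Qed.

Lemma log2_weight_le_powR rho eps xi : 0 < eps -> 0 <= xi ->
  exists2 C, 0 < C & forall t, 0 < t -> t <= 2^-1 ->
    t `^ (rho + eps) * `|log2 t| `^ xi <= C * t `^ rho.
Proof.
move=> e0 xi0; set c := eps * ln 2.
have c0 : 0 < c by rewrite mulr_gt0 // ln2_gt0.
exists (expR (- (xi * ln (c / (xi + 1))))); first exact: expR_gt0.
move=> t t0 th; have l1 := log2_le_N1 t0 th.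
rewrite powRD ?(gt_eqF t0) ?implybT // -mulrA [leRHS]mulrC ler_wpM2l ?powR_ge0 //.
have -> : t `^ eps = expR (- (c * `|log2 t|)).
  by rewrite /powR gt_eqF // ln_log2 ler0_norm; [congr expR; rewrite /c; ring | lra].
rewrite mulrC; apply: powR_mul_expR_le => //; rewrite ler0_norm; lra.
Qed.

End LogWeight.

Section Covers.
Variable R : realType.
Implicit Types (n : int) (E : set R) (g h : R -> R).

Lemma admissible_rel_diam n E s p : admissible n E s -> p \in s ->
  0 < rel_diam R n p <= 2^-1.
Proof.
move=> [adm _] ps; have [lt12 sub] := adm p ps.
have [s1 s2] : shell n (p.1%:R : R) /\ shell n (p.2%:R : R).
  by split; apply: sub; rewrite /nat_itv /= in_itv /= lexx ler_nat ltnW.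
move: s1 s2; rewrite /shell; case: ifPn => [_ _|n_ge0].
  rewrite /= in_itv /= => /andP[_ p2_lt].
  have ge1_p2 : (1 : R) <= p.2%:R by rewrite ler1n (leq_ltn_trans _ lt12).
  have := le_lt_trans ge1_p2 p2_lt.
  by rewrite invf_gt1 // ltNge ler1n.
rewrite /= !in_itv /= => /andP[p1_ge _] /andP[_ p2_lt].
have pow2n_gt0 : 0 < (2 : R) ^ n by rewrite exprz_gt0 // ltr0n.
have pow2n_half : (2 : R) ^ (n - 1) = (2 : R) ^ n / 2.
  by rewrite expfzDr ?pnatr_eq0 // exprN1.
rewrite /rel_diam natrB ?(ltnW lt12) // divr_gt0 ?subr_gt0 ?ltr_nat //=.
rewrite ler_pdivrMr // mulrC -pow2n_half; lra.
Qed.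

Lemma cover_inf_ge0 g n E : (forall t, 0 <= g t) -> (0 <= cover_inf g n E)%E.
Proof.
move=> g0; apply: le_ereal_inf_tmp => _ [s _ <-].
by rewrite lee_fin sumr_ge0.
Qed.

Lemma cover_inf_le_scale g h C n E : 0 < C ->
  (forall t, 0 < t -> t <= 2^-1 -> h t <= C * g t) ->
  (cover_inf h n E <= C%:E * cover_inf g n E)%E.
Proof.
move=> C0 hCg; rewrite /cover_inf -ereal_inf_pZl //.
apply: le_ereal_inf_tmp => _ [_ [s adm <-] <-]; apply: ge_ereal_inf.
exists (\sum_(p <- s) h (rel_diam R n p))%:E; first by exists s.
rewrite -EFinM lee_fin mulr_sumr big_seq [leRHS]big_seq; apply: ler_sum => p ps.
by have /andP[? ?] := admissible_rel_diam adm ps; apply: hCg.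
Qed.

Lemma le_cover_inf g h n E : (forall t, 0 < t -> t <= 2^-1 -> g t <= h t) ->
  (cover_inf g n E <= cover_inf h n E)%E.
Proof.
move=> hg; rewrite -[leRHS]mul1e; apply: cover_inf_le_scale => // t t0 th.
by rewrite mul1r hg.
Qed.

End Covers.

Section ShellSums.
Variable R : realType.
Implicit Types (f g : int -> \bar R) (E : set R) (xi rho eps : R).

Lemma sum_shells_lty_scale f g C : 0 <= C ->
  (forall n, (0 <= f n)%E) -> (forall n, (0 <= g n)%E) ->
  (forall n, (g n <= C%:E * f n)%E) ->
  (sum_shells f < +oo)%E -> (sum_shells g < +oo)%E.
Proof.
move=> C0 f0 g0 gCf f_fin; apply: (@le_lt_trans _ _ (C%:E * sum_shells f)%E).
  by rewrite /sum_shells -nneseriesZl //; apply: lee_nneseries.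
exact: lte_mul_pinfty.
Qed.

Lemma sum_nu_lty_of_nu_tilde rho xi E : 0 <= xi ->
  (sum_shells (fun n => nu_tilde rho xi n E) < +oo)%E ->
  (sum_shells (fun n => nu rho n E) < +oo)%E.
Proof.
move=> xi0; apply: (@sum_shells_lty_scale _ _ 1) => // [n|n|n].
- by apply: cover_inf_ge0 => t; rewrite mulr_ge0 ?powR_ge0.
- by apply: cover_inf_ge0 => t; apply: powR_ge0.
- by rewrite mul1e; apply: le_cover_inf => t; apply: powR_le_log2_weight.
Qed.

Lemma sum_nu_tilde_lty_of_nu rho eps xi E : 0 < eps -> 0 <= xi ->
  (sum_shells (fun n => nu rho n E) < +oo)%E ->
  (sum_shells (fun n => nu_tilde (rho + eps) xi n E) < +oo)%E.
Proof.
move=> eps0 xi0; have [C C0 bound] := log2_weight_le_powR rho eps0 xi0.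
apply: (@sum_shells_lty_scale _ _ C (ltW C0)) => n.
- by apply: cover_inf_ge0 => t; apply: powR_ge0.
- by apply: cover_inf_ge0 => t; rewrite mulr_ge0 ?powR_ge0.
- exact: cover_inf_le_scale.
Qed.

End ShellSums.

Lemma ereal_inf_EFin_shift (R : realType) (A B : set R) : A `<=` B ->
  (forall r e, B r -> 0 < e -> A (r + e)) ->
  ereal_inf (EFin @` A) = ereal_inf (EFin @` B).
Proof.
move=> AB BA; apply/eqP; rewrite eq_le; apply/andP; split.
  apply: le_ereal_inf_tmp => _ [r Br <-]; apply/lee_addgt0Pr => e e0.
  by apply: ereal_inf_lbound; exists (r + e); [exact: BA | rewrite EFinD].
exact/ereal_inf_le_tmp/image_subset.
Qed.

Theorem lemma3 (R : realType) (xi : R) (hxi : 0 <= xi) (E : set R)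
  (hE : E `<=` `[0, +oo[%classic) :
  DimH E = ereal_inf [set rho%:E | rho in [set rho : R |
     0 < rho /\ (sum_shells (fun n => nu_tilde rho xi n E) < +oo)%E]].
Proof.
rewrite /DimH; symmetry; apply: ereal_inf_EFin_shift.
  by move=> rho [rho0 fin]; split; last exact: sum_nu_lty_of_nu_tilde fin.
move=> rho eps [rho0 fin] eps0; split; first exact: addr_gt0.
exact: sum_nu_tilde_lty_of_nu.
Qed.
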